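(* $\bigcap \mathcal{L}(S_{r,N})=\{\{n\}: n\in\mathbb{N}\}$, where the intersection is taken over all nontrivial atomic exponential Puiseux semirings $S_{r,N}$ (i.e., over all numerical monoids $N$ and all $r\in\mathbb{Q}_{>0}\setminus\mathbb{N}$ with $\mathsf{n}(r)>1$).
   Context: $\mathbb{N}=\{0,1,2,\dots\}$. A numerical monoid $N$ is an additive submonoid of $\mathbb{N}$ with finite complement in $\mathbb{N}$. For $r\in\mathbb{Q}_{>0}$ write $r=\mathsf{n}(r)/\mathsf{d}(r)$ in lowest terms. The exponential Puiseux semiring $S_{r,N}$ is the additive submonoid of $\mathbb{Q}_{\ge0}$ generated by $\{r^k:k\in N\}$; it is called nontrivial if $r\notin\mathbb{N}$, and for $r\notin\mathbb{N}$ it is atomic iff $\mathsf{n}(r)>1$, with atoms $r^s$, $s\in N$. For an atomic monoid $M$, $\mathsf{L}(x)$ is the set of lengths of factorizations of $x$ into atoms ($\mathsf{L}(0)=\{0\}$), and $\mathcal{L}(M)=\{\mathsf{L}(x):x\in M\}$ is its system of sets of lengths. *)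

From mathcomp Require Import all_boot all_order all_algebra.
Set Implicit Arguments. Unset Strict Implicit. Unset Printing Implicit Defensive.
Import Order.TTheory GRing.Theory Num.Theory.
Local Open Scope ring_scope.

Definition numerical_monoid (N : nat -> Prop) : Prop :=
  [/\ N 0%N, (forall a b, N a -> N b -> N (a + b)%N)
    & exists b : nat, forall n, (b <= n)%N -> N n].

(* Membership in the exponential Puiseux semiring S_{r,N}: the additive
   submonoid of Q_{>=0} generated by { r^k : k in N }, i.e. finite sums
   of such powers (the empty sum being 0). *)
Definition in_SrN (r : rat) (N : nat -> Prop) (x : rat) : Prop :=
  exists s : seq nat, (forall k, k \in s -> N k) /\ x = \sum_(k <- s) r ^+ k.

Definition is_atom (r : rat) (N : nat -> Prop) (a : rat) : Prop :=
  [/\ in_SrN r N a, a != 0 &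
      forall b c, in_SrN r N b -> in_SrN r N c -> a = b + c -> b = 0 \/ c = 0].

Definition lengths (r : rat) (N : nat -> Prop) (x : rat) (n : nat) : Prop :=
  exists s : seq rat, [/\ size s = n, (forall a, a \in s -> is_atom r N a)
                        & x = \sum_(a <- s) a].

Definition in_system_of_lengths (r : rat) (N : nat -> Prop) (A : nat -> Prop) :=
  exists x, in_SrN r N x /\ (forall n, A n <-> lengths r N x n).

Definition nontrivial_atomic_params (r : rat) (N : nat -> Prop) : Prop :=
  [/\ numerical_monoid N, 0 < r, ~~ (r \is a Num.nat) & (1 < numq r)%R].

(* Write r = a/b in lowest terms, so a = numq r > 1 and b = denq r > 1.  The atoms
   of S_{r,N} are the powers r^k (k in N), so a factorization of length m of x
   is a sequence s of m exponents in N with x = sum_{k in s} r^k.  Clearing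
   denominators, an equality of two such power sums becomes an integer relation
     sum_{j<M} D_j a^j b^(M-1-j) = 0,   D_j = #{j in s} - #{j in t}.
   Two facts about such relations drive the proof:
   - (rigidity) if all D_j >= -1 then all D_j vanish; taking t without
     repetitions shows that sum_{k<-t} r^k has the single length |t|;
   - (congruence) (a - b) divides sum_j D_j, since a^j = b^j mod (a - b);
     so any two lengths of an element are congruent modulo a - b.
   The first fact shows every singleton {n} lies in every system of sets of
   lengths (use n distinct exponents of N).  Conversely, a common set of lengths
   is nonempty, and for r = (2K+1)/2 with K large any two of its elements are
   congruent modulo 2K - 1, hence equal. *)
From mathcomp Require Import all_boot all_order all_algebra.
From mathcomp Require Import zify ring lra.
Import Order.TTheory GRing.Theory Num.Theory.
Set Implicit Arguments. Unset Strict Implicit.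
Local Open Scope ring_scope.

Section ClearedSums.
Variables a b : int.

(* b^(M-1) * sum_{j<M} D_j (a/b)^j: the integer obtained by clearing the
   denominators of a rational combination of powers of a/b. *)
Definition cleared_sum (M : nat) (D : nat -> int) : int :=
  \sum_(j < M) D j * (a ^+ j * b ^+ (M - j.+1)).

Lemma cleared_sumS M D :
  cleared_sum M.+1 D = D 0%N * b ^+ M + a * cleared_sum M (fun j => D j.+1).
Proof.
rewrite /cleared_sum big_ord_recl /= subn1 expr0 mul1r mulr_sumr.
congr (_ + _); apply: eq_bigr => j _.
rewrite /bump add1n subSS exprS; ring.
Qed.

(* Reducing
   mod a shows a | q b - D_0; the quotient Q <= 0 feeds the induction, and then
   D_0 = q b with D_0 >= -1 forces q = 0. *)
Lemma cleared_sum_rigid : 1 < a -> 1 < b -> coprimez a b ->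
  forall M D q, (forall j, -1 <= D j) -> q <= 0 ->
  cleared_sum M D = q * b ^+ M -> q = 0 /\ (forall j, (j < M)%N -> D j = 0).
Proof.
move=> a_gt1 b_gt1 cab; elim=> [|M IH] D q D_ge q_le.
  by rewrite /cleared_sum big_ord0 expr0 mulr1 => <-.
rewrite cleared_sumS; set S := cleared_sum M _ => E.
have aS : a * S = (q * b - D 0%N) * b ^+ M by rewrite mulrBl -mulrA -exprS -E; ring.
have : (a %| (q * b - D 0%N) * b ^+ M)%Z by rewrite -aS dvdz_mulr.
rewrite Gauss_dvdzl ?coprimezXr // => /dvdzP[Q EQ].
have a_neq0 : a != 0 by rewrite gt_eqF // (lt_trans _ a_gt1).
have ES : S = Q * b ^+ M by apply: (mulfI a_neq0); rewrite aS EQ; ring.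
have D0_ge := D_ge 0%N.
have [Q0 DS] := IH _ Q (fun j => D_ge j.+1) ltac:(nia) ES.
have q0 : q = 0 by move: EQ; rewrite Q0 mul0r; nia.
split=> // -[|j] jM; last exact: DS.
by move: EQ; rewrite Q0 q0; lra.
Qed.

(* Congruence: as a^j = b^j modulo a - b, a vanishing cleared sum gives
   (a - b) | b^(M-1) sum_j D_j, and b is invertible modulo a - b. *)
Lemma cleared_sum_cong M D : coprimez (a - b) b ->
  cleared_sum M D = 0 -> (a - b %| \sum_(j < M) D j)%Z.
Proof.
move=> cab E.
have split_sum : \sum_(j < M) D j * b ^+ M.-1 = cleared_sum M D
  - \sum_(j < M) D j * ((a ^+ j - b ^+ j) * b ^+ (M - j.+1)).
  rewrite -sumrB; apply: eq_bigr => j _.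
  have -> : M.-1 = (j + (M - j.+1))%N by have := ltn_ord j; lia.
  rewrite exprD; ring.
have dvd_diff : (a - b %| \sum_(j < M) D j * ((a ^+ j - b ^+ j) * b ^+ (M - j.+1)))%Z.
  apply: rpred_sum => j _; rewrite subrXX.
  by apply: dvdz_mull; apply: dvdz_mulr; apply: dvdz_mulr; apply: dvdzz.
rewrite E sub0r -mulr_suml in split_sum.
move: dvd_diff; rewrite -[X in (_ %| X)%Z]opprK -split_sum dvdzE abszN -dvdzE.
by rewrite Gauss_dvdzl // coprimezXr.
Qed.

End ClearedSums.

Lemma sum_by_count (R : nmodType) (F : nat -> R) M (s : seq nat) :
  all (fun k => k < M)%N s ->
  \sum_(k <- s) F k = \sum_(j < M) F j *+ count_mem (j : nat) s.
Proof.
elim: s => [_|x s IH /andP[xM /IH sum_s]]; first by rewrite big_nil big1.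
rewrite big_cons sum_s [RHS](bigD1 (Ordinal xM)) // [in LHS](bigD1 (Ordinal xM)) //=.
rewrite eqxx add1n mulrS addrA; congr (_ + _); apply: eq_bigr => j jx.
by rewrite -val_eqE /= eq_sym in jx; rewrite (negbTE jx) add0n.
Qed.

Section PowerSums.
Variable r : rat.

Definition count_diff (s t : seq nat) (j : nat) : int :=
  (count_mem j s)%:R - (count_mem j t)%:R.

Lemma power_sum_cleared (s t : seq nat) :
  \sum_(k <- s) r ^+ k = \sum_(k <- t) r ^+ k ->
  exists M, [/\ all (fun k => k < M)%N s, all (fun k => k < M)%N t &
               cleared_sum (numq r) (denq r) M (count_diff s t) = 0].
Proof.
move=> Est.
have [M sM tM] : exists2 M, all (fun k => k < M)%N s & all (fun k => k < M)%N t.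
  exists (\max_(k <- s ++ t) k).+1; apply/allP => k kst; rewrite ltnS;
    by apply: leq_bigmax_seq => //; rewrite mem_cat kst ?orbT.
exists M; split => //.
have clear u : all (fun k => k < M)%N u ->
    ((\sum_(k <- u) numq r ^+ k * denq r ^+ (M - k.+1))%:~R : rat)
    = (denq r)%:~R ^+ M.-1 * \sum_(k <- u) r ^+ k.
  move=> uM; rewrite rmorph_sum mulr_sumr big_seq [RHS]big_seq.
  apply: eq_bigr => k /(allP uM) kM.
  rewrite -[X in _ * X ^+ k](divq_num_den r) expr_div_n rmorphM !rmorphXn /=.
  have -> : M.-1 = (k + (M - k.+1))%N by lia.
  have : (denq r)%:~R != 0 :> rat by rewrite intr_eq0 denq_neq0.
  move: (numq r)%:~R (denq r)%:~R => n d d0.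
  by rewrite exprD; field; rewrite expf_neq0.
have E : \sum_(k <- s) numq r ^+ k * denq r ^+ (M - k.+1)
       = \sum_(k <- t) numq r ^+ k * denq r ^+ (M - k.+1).
  by apply: (@intr_inj rat); rewrite !clear // Est.
rewrite (sum_by_count _ sM) (sum_by_count _ tM) in E.
rewrite /cleared_sum /count_diff; under eq_bigr do rewrite mulrBl !mulr_natl.
by rewrite sumrB E subrr.
Qed.

Lemma sum_count_diff M (s t : seq nat) :
  all (fun k => k < M)%N s -> all (fun k => k < M)%N t ->
  \sum_(j < M) count_diff s t j = (size s)%:R - (size t)%:R.
Proof.
have size_count u : all (fun k => k < M)%N u ->
    (size u)%:R = \sum_(j < M) (count_mem (j : nat) u)%:R :> int.
  move=> uM; rewrite -sum1_size natr_sum (sum_by_count _ uM).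
  by apply: eq_bigr => j _; rewrite -mulr_natl mulr1.
by move=> sM tM; rewrite sumrB -!size_count.
Qed.

Lemma power_sum_size_eq (s t : seq nat) : 1 < numq r -> 1 < denq r -> uniq t ->
  \sum_(k <- s) r ^+ k = \sum_(k <- t) r ^+ k -> size s = size t.
Proof.
move=> num_gt1 den_gt1 t_uniq Est.
have [M [sM tM E]] := power_sum_cleared Est.
have D_ge j : -1 <= count_diff s t j.
  by rewrite /count_diff (count_uniq_mem j t_uniq); case: (j \in t); lia.
have cab : coprimez (numq r) (denq r) by rewrite coprimezE coprime_num_den.
have [_ D0] := cleared_sum_rigid num_gt1 den_gt1 cab D_ge (lexx 0)
  (etrans E (esym (mul0r _))).
apply/eqP; rewrite -(eqr_nat int) -subr_eq0 -(sum_count_diff sM tM).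
by rewrite big1 // => j _; apply: D0.
Qed.

Lemma power_sum_size_cong (s t : seq nat) :
  \sum_(k <- s) r ^+ k = \sum_(k <- t) r ^+ k ->
  (numq r - denq r %| (size s)%:R - (size t)%:R)%Z.
Proof.
move=> Est; have [M [sM tM E]] := power_sum_cleared Est.
rewrite -(sum_count_diff sM tM); apply: cleared_sum_cong E.
(* gcd (a - b, b) = gcd (a, b) = 1 *)
rewrite coprimez_sym /coprimez (_ : numq r - denq r = -1 * denq r + numq r).
  by rewrite gcdzMDl -/(coprimez _ _) coprimez_sym coprimezE coprime_num_den.
by rewrite mulN1r addrC.
Qed.

End PowerSums.

Lemma in_SrN_power (r : rat) (N : nat -> Prop) k : N k -> in_SrN r N (r ^+ k).
Proof. by exists [:: k]; split; [move=> j; rewrite inE => /eqP -> | rewrite big_seq1]. Qed.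

(* Every atom is a generator: a sum of two or more powers splits nontrivially. *)
Lemma atom_is_power (r : rat) (N : nat -> Prop) y : 0 < r -> is_atom r N y ->
  exists2 k, N k & y = r ^+ k.
Proof.
move=> r_gt0 [[[|k s] [Ns ->]] y_neq0 y_atom]; first by rewrite big_nil eqxx in y_neq0.
have Nk : N k by apply: Ns; rewrite inE eqxx.
have S_s : in_SrN r N (\sum_(j <- s) r ^+ j).
  by exists s; split => // j js; apply: Ns; rewrite inE js orbT.
rewrite big_cons in y_atom *.
have [/eqP|->] := y_atom _ _ (in_SrN_power r Nk) S_s erefl.
  by rewrite expf_eq0 gt_eqF // andbF.
by exists k; rewrite ?addr0.
Qed.

Section Factorizations.
Variables (r : rat) (N : nat -> Prop).
Hypothesis params : nontrivial_atomic_params r N.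

(* r = a/b with a > 1 (atomicity) and b > 1 (r is not an integer). *)
Lemma num_den_gt1 : 1 < numq r /\ 1 < denq r.
Proof.
case: params => _ r_gt0 r_notnat num_gt1; split => //.
have d_neq1 : denq r != 1.
  apply: contra r_notnat => /eqP d1.
  by rewrite natrEint Qint_def d1 eqxx ltW.
by have := denq_gt0 r; lia.
Qed.

(* Conversely every generator is an atom: by power_sum_size_eq, r^k is not a
   sum of two or more powers of r. *)
Lemma power_is_atom k : N k -> is_atom r N (r ^+ k).
Proof.
case: params => _ r_gt0 _ _ Nk; split; first exact: in_SrN_power.
  by rewrite expf_eq0 gt_eqF // andbF.
move=> _ _ [s1 [_ ->]] [s2 [_ ->]] E.
have [num_gt1 den_gt1] := num_den_gt1.
have := @power_sum_size_eq r (s1 ++ s2) [:: k] num_gt1 den_gt1 erefl.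
rewrite big_cat /= big_seq1 -E size_cat => /(_ erefl).
case: s1 {E} => [|? s1] /=; first by left; rewrite big_nil.
by case: s2 => [|? s2] /=; [right; rewrite big_nil | rewrite addnS].
Qed.

Lemma lengthsP x m : lengths r N x m <->
  exists s, [/\ size s = m, forall k, k \in s -> N k & x = \sum_(k <- s) r ^+ k].
Proof.
case: params => _ r_gt0 _ _; split.
  move=> [l [<- l_atoms ->]]; elim: l l_atoms => [|y l IH] l_atoms.
    by exists [::]; rewrite !big_nil.
  have [k Nk ->] := atom_is_power r_gt0 (l_atoms y (mem_head _ _)).
  rewrite big_cons; have [|s [size_s Ns ->]] := IH.
    by move=> a al; apply: l_atoms; rewrite inE al orbT.
  exists (k :: s); rewrite /= size_s big_cons; split => // j.
  by rewrite inE => /orP[/eqP ->|/Ns].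
move=> [s [<- Ns ->]]; exists [seq r ^+ k | k <- s]; rewrite size_map big_map.
by split => // y /mapP[k ks ->]; apply/power_is_atom/Ns.
Qed.

Lemma lengths_cong x m n : lengths r N x m -> lengths r N x n ->
  (numq r - denq r %| m%:R - n%:R)%Z.
Proof.
move=> /lengthsP[s [<- _ ->]] /lengthsP[t [<- _ Est]].
exact: power_sum_size_cong.
Qed.

(* Every singleton is a set of lengths: take n distinct exponents of N (all
   integers beyond the conductor bound c lie in N). *)
Lemma singleton_lengths n :
  exists x, in_SrN r N x /\ forall m, lengths r N x m <-> m = n.
Proof.
case: params => [[_ _ [c Nc]] _ _ _].
have Ns k : k \in iota c n -> N k by rewrite mem_iota => /andP[/Nc].
exists (\sum_(k <- iota c n) r ^+ k); split; first by exists (iota c n).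
move=> m; split => [/lengthsP[s [<- _ Est]]|->].
  have [num_gt1 den_gt1] := num_den_gt1.
  by rewrite (power_sum_size_eq num_gt1 den_gt1 (iota_uniq c n) (esym Est)) size_iota.
by apply/lengthsP; exists (iota c n); rewrite size_iota.
Qed.

End Factorizations.

(* The family r_K = (2K+1)/2, for which numq r_K - denq r_K = 2K - 1 is
   arbitrarily large. *)
Definition half_odd (K : nat) : rat := (K.*2.+1)%:~R / 2%:~R.

Lemma half_odd_num_den K : numq (half_odd K) = (K.*2.+1)%:Z /\ denq (half_odd K) = 2.
Proof.
have cop : coprime `|(K.*2.+1)%:Z| `|2 : int| by rewrite /= coprimen2 /= odd_double.
by rewrite /half_odd coprimeq_num ?coprimeq_den // mul1r.
Qed.

Lemma half_odd_params K : (0 < K)%N ->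
  nontrivial_atomic_params (half_odd K) (fun _ => True).
Proof.
have [num den] := half_odd_num_den K; move=> K_gt0; split.
- by split => //; exists 0%N.
- by rewrite -numq_gt0 num.
- by rewrite natrEint Qint_def den.
- by rewrite num; lia.
Qed.

Theorem mainTheorem5 (A : nat -> Prop) :
  (forall (r : rat) (N : nat -> Prop),
      nontrivial_atomic_params r N -> in_system_of_lengths r N A)
  <-> (exists n : nat, forall m, A m <-> m = n).
Proof.
split=> [A_sys|[n An] r N params]; last first.
  have [x [Sx Lx]] := singleton_lengths params n.
  by exists x; split => // m; rewrite An Lx.
have params1 := half_odd_params (isT : (0 < 1)%N).
have [x [[s [_ ->]] Ax]] := A_sys _ _ params1.
have As : A (size s) by apply/Ax/(lengthsP params1); exists s.
exists (size s) => m; split => [Am|->//].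
have K_gt0 : (0 < (m + size s).+1)%N by [].
have [y [_ Ay]] := A_sys _ _ (half_odd_params K_gt0).
(* m and size s are both lengths of y, so 2(m + size s) + 1 divides m - size s *)
have := lengths_cong (half_odd_params K_gt0) (proj1 (Ay m) Am) (proj1 (Ay _) As).
have [-> ->] := half_odd_num_den (m + size s).+1.
rewrite !natz -addnn => /dvdzP[q Eq].
by have [q_lt0|q_gt0|q0] := ltgtP q 0; nia.
Qed.
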